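(* Let $n \in \mathbb N$. Then $P^n_{BM}\subsetneq P^n_M \subsetneq P^n_{MB} = P^n_B$.
   Context: $\mathbb R_+=[0,\infty)$. A b-metric on $X$ is $d\colon X^2\to\mathbb R_+$ with $d(x,y)=0\iff x=y$, $d(x,y)=d(y,x)$, and for some $K\geqslant1$, $d(x,z)\leqslant K(d(x,y)+d(y,z))$ for all $x,y,z$; a metric is a b-metric with $K=1$. For $F\colon\mathbb R_+^n\to\mathbb R_+$ and spaces $(X_i,d_i)$ put $D(\mathbf x,\mathbf y)=F(d_1(x_1,y_1),\dots,d_n(x_n,y_n))$ on $\prod_{i=1}^nX_i$. $P^n_{BM}$: the set of $F$ such that $D$ is a metric for every collection of b-metric spaces (arbitrary constants); $P^n_M$: $D$ is a metric for every collection of metric spaces; $P^n_{MB}$: $D$ is a b-metric for every collection of metric spaces; $P^n_B$: $D$ is a b-metric for every collection of b-metric spaces (arbitrary constants). *)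

From Stdlib Require Import Reals.
From mathcomp Require Import all_boot.

Set Implicit Arguments.
Unset Strict Implicit.

Local Open Scope R_scope.

Definition is_bmetric_K {X : Type} (d : X -> X -> R) (K : R) : Prop :=
  1 <= K /\
  (forall x y, 0 <= d x y) /\
  (forall x y, d x y = 0 <-> x = y) /\
  (forall x y, d x y = d y x) /\
  (forall x y z, d x z <= K * (d x y + d y z)).

Definition is_bmetric {X : Type} (d : X -> X -> R) : Prop :=
  exists K, is_bmetric_K d K.

Definition is_metric {X : Type} (d : X -> X -> R) : Prop := is_bmetric_K d 1.

Definition nonneg_fun (n : nat) (F : ('I_n -> R) -> R) : Prop :=
  forall v : 'I_n -> R, (forall i, 0 <= v i) -> 0 <= F v.

Definition prodD (n : nat) (X : 'I_n -> Type) (d : forall i, X i -> X i -> R)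
  (F : ('I_n -> R) -> R) : (forall i, X i) -> (forall i, X i) -> R :=
  fun x y => F (fun i => d i (x i) (y i)).

Definition P_BM (n : nat) (F : ('I_n -> R) -> R) : Prop :=
  nonneg_fun F /\
  forall (X : 'I_n -> Type) (d : forall i, X i -> X i -> R),
    (forall i, is_bmetric (d i)) -> is_metric (prodD d F).

Definition P_M (n : nat) (F : ('I_n -> R) -> R) : Prop :=
  nonneg_fun F /\
  forall (X : 'I_n -> Type) (d : forall i, X i -> X i -> R),
    (forall i, is_metric (d i)) -> is_metric (prodD d F).

Definition P_MB (n : nat) (F : ('I_n -> R) -> R) : Prop :=
  nonneg_fun F /\
  forall (X : 'I_n -> Type) (d : forall i, X i -> X i -> R),
    (forall i, is_metric (d i)) -> is_bmetric (prodD d F).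

Definition P_B (n : nat) (F : ('I_n -> R) -> R) : Prop :=
  nonneg_fun F /\
  forall (X : 'I_n -> Type) (d : forall i, X i -> X i -> R),
    (forall i, is_bmetric (d i)) -> is_bmetric (prodD d F).

(* Every metric is a b-metric, which gives the inclusions.  Both strict
   inclusions are witnessed by F(v) = phi(v_0) + [v <> 0] with phi(t) = t and
   phi(t) = t^2: the indicator adds the discrete metric, which makes D definite,
   and phi decides which triangle inequality survives.

   For P_MB = P_B, every triangle with sides (a, b, c) embeds isometrically into
   (R^3, sup-distance); applying the hypothesis to products of copies of that
   space shows that F in P_MB satisfies F(a) <= K (F(b) + F(c)) whenever
   (a_i, b_i, c_i) are the sides of a triangle for each i.  Hence
   F(x) <= (2K)^(m+1) F(y) whenever 0 <= x <= 2^m y, and splitting a <= 2^m (b + c)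
   as min(a, 2^m b) + (a - min(a, 2^m b)) yields a relaxed triangle inequality
   for D on any product of b-metric spaces whose constants are at most 2^m. *)
From Stdlib Require Import Reals Lra.
From Stdlib Require Import ClassicalDescription FunctionalExtensionality.
From mathcomp Require Import all_boot.

Set Implicit Arguments.
Unset Strict Implicit.

Local Open Scope R_scope.

Definition is_semimetric (X : Type) (d : X -> X -> R) : Prop :=
  (forall x y, 0 <= d x y) /\ (forall x y, d x y = 0 <-> x = y) /\
  (forall x y, d x y = d y x).

Lemma bmetric_K_semimetric (X : Type) (d : X -> X -> R) (K : R) :
  is_bmetric_K d K -> is_semimetric d.
Proof. by case=> _ [d_ge0 [d_eq0 [d_sym _]]]; split; [|split]. Qed.

Lemma semimetric_bmetric_K (X : Type) (d : X -> X -> R) (K : R) :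
  is_semimetric d -> 1 <= K -> (forall x y z, d x z <= K * (d x y + d y z)) ->
  is_bmetric_K d K.
Proof.
  case=> d_ge0 [d_eq0 d_sym] K_ge1 d_tri.
  exact: conj K_ge1 (conj d_ge0 (conj d_eq0 (conj d_sym d_tri))).
Qed.

Lemma metric_bmetric (X : Type) (d : X -> X -> R) : is_metric d -> is_bmetric d.
Proof. by exists 1. Qed.

Lemma bmetric_K_weaken (X : Type) (d : X -> X -> R) (K K' : R) :
  is_bmetric_K d K -> K <= K' -> is_bmetric_K d K'.
Proof.
  move=> dK le_KK'; have d_semi := bmetric_K_semimetric dK.
  case: dK => K_ge1 [d_ge0 [_ [_ d_tri]]].
  apply: semimetric_bmetric_K => [//||x y z]; first lra.
  have := d_tri x y z; have := d_ge0 x y; have := d_ge0 y z; nra.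
Qed.

Lemma bmetric_pow2 (X : Type) (d : X -> X -> R) :
  is_bmetric d -> exists m : nat, is_bmetric_K d (2 ^ m).
Proof.
  case=> K dK; have [m Hm] := Pow_x_infinity 2 ltac:(rewrite Rabs_right; lra) K.
  exists m; apply: (bmetric_K_weaken dK).
  have := Hm m (le_n m); rewrite Rabs_right; first lra.
  by apply/Rle_ge/pow_le; lra.
Qed.

Lemma bmetric_common_pow2 (n : nat) (X : 'I_n -> Type)
    (d : forall i, X i -> X i -> R) :
  (forall i, is_bmetric (d i)) -> exists m : nat, forall i, is_bmetric_K (d i) (2 ^ m).
Proof.
  move=> d_b; have [m Hm] := fin_all_exists (fun i => bmetric_pow2 (d_b i)).
  exists (\max_i m i)%N => i; apply: (bmetric_K_weaken (Hm i)).
  by apply: Rle_pow; [lra | apply/leP/leq_bigmax].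
Qed.

Lemma metric_sq_bmetric (X : Type) (d : X -> X -> R) :
  is_metric d -> is_bmetric_K (fun x y => d x y ^ 2) 2.
Proof.
  move=> d_metric; have [d_ge0 [d_eq0 d_sym]] := bmetric_K_semimetric d_metric.
  case: d_metric => _ [_ [_ [_ d_tri]]].
  apply: semimetric_bmetric_K; [split; [|split] | lra |].
  - by move=> x y; apply: pow2_ge_0.
  - move=> x y; rewrite -d_eq0; split=> [?|->]; [nra | ring].
  - by move=> x y; rewrite d_sym.
  - move=> x y z.
    have : d x z ^ 2 <= (d x y + d y z) ^ 2.
      apply: pow_incr; split; first exact: d_ge0.
      by rewrite -[_ + _]Rmult_1_l; apply: d_tri.
    have := pow2_ge_0 (d x y - d y z); nra.
Qed.

Lemma Rdist_metric : is_metric Rdist.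
Proof.
  apply: semimetric_bmetric_K; [split; [|split] | lra |].
  - by move=> x y; apply/Rge_le/Rdist_pos.
  - exact: Rdist_refl.
  - exact: Rdist_sym.
  - by move=> x y z; rewrite Rmult_1_l; apply: Rdist_tri.
Qed.

Definition definite (n : nat) (F : ('I_n -> R) -> R) : Prop :=
  forall v, (forall i, 0 <= v i) -> F v = 0 <-> forall i, v i = 0.

Lemma prodD_semimetric (n : nat) (X : 'I_n -> Type)
    (d : forall i, X i -> X i -> R) (F : ('I_n -> R) -> R) :
  nonneg_fun F -> definite F -> (forall i, is_semimetric (d i)) ->
  is_semimetric (prodD d F).
Proof.
  move=> F_ge0 F_def d_semi; rewrite /prodD.
  have d_ge0 i a b : 0 <= d i a b by case: (d_semi i).
  have d_eq0 i a b : d i a b = 0 <-> a = b by case: (d_semi i) => _ [].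
  have d_sym i a b : d i a b = d i b a by case: (d_semi i) => _ [].
  split; [|split].
  - by move=> x y; apply: F_ge0 => i; apply: d_ge0.
  - move=> x y; rewrite F_def => [|i]; last exact: d_ge0.
    split=> [dxy0 | -> i]; last exact/d_eq0.
    by apply: functional_extensionality_dep => i; apply/d_eq0.
  - move=> x y; congr F; apply: functional_extensionality => i; exact: d_sym.
Qed.

Lemma P_BM_P_M (n : nat) (F : ('I_n -> R) -> R) : P_BM F -> P_M F.
Proof.
  case=> F_ge0 F_BM; split=> // X d d_metric.
  by apply: F_BM => i; apply: metric_bmetric.
Qed.

Lemma P_M_P_MB (n : nat) (F : ('I_n -> R) -> R) : P_M F -> P_MB F.
Proof. by case=> F_ge0 F_M; split=> // X d d_metric; apply/metric_bmetric/F_M. Qed.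

Lemma P_B_P_MB (n : nat) (F : ('I_n -> R) -> R) : P_B F -> P_MB F.
Proof.
  case=> F_ge0 F_B; split=> // X d d_metric.
  by apply: F_B => i; apply: metric_bmetric.
Qed.

Definition triangular (a b c : R) : Prop :=
  0 <= a /\ 0 <= b /\ 0 <= c /\ a <= b + c /\ b <= a + c /\ c <= a + b.

Definition supd3 (p q : R * R * R) : R :=
  let '(p1, p2, p3) := p in let '(q1, q2, q3) := q in
  Rmax (Rabs (p1 - q1)) (Rmax (Rabs (p2 - q2)) (Rabs (p3 - q3))).

Lemma supd3_ge_coord (p1 p2 p3 q1 q2 q3 : R) :
  [/\ Rdist p1 q1 <= supd3 (p1, p2, p3) (q1, q2, q3),
      Rdist p2 q2 <= supd3 (p1, p2, p3) (q1, q2, q3) &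
      Rdist p3 q3 <= supd3 (p1, p2, p3) (q1, q2, q3)].
Proof.
  split; first exact: Rmax_l.
  - by apply: Rle_trans (Rmax_r _ _); apply: Rmax_l.
  - by apply: Rle_trans (Rmax_r _ _); apply: Rmax_r.
Qed.

Lemma supd3_metric : is_metric supd3.
Proof.
  apply: semimetric_bmetric_K; [split; [|split] | lra |].
  - move=> [[p1 p2] p3] [[q1 q2] q3].
    case: (supd3_ge_coord p1 p2 p3 q1 q2 q3) => ? _ _.
    have := Rdist_pos p1 q1; lra.
  - move=> [[p1 p2] p3] [[q1 q2] q3]; split=> [pq0 | [<- <- <-]].
      case: (supd3_ge_coord p1 p2 p3 q1 q2 q3); rewrite pq0.
      have Rdist_le0 u v : Rdist u v <= 0 -> u = v.
        by move=> ?; apply/Rdist_refl/Rle_antisym => //; apply/Rge_le/Rdist_pos.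
      by move=> /Rdist_le0 -> /Rdist_le0 -> /Rdist_le0 ->.
    rewrite /= !Rminus_diag Rabs_R0 !Rmax_left; lra.
  - move=> [[p1 p2] p3] [[q1 q2] q3] /=.
    by rewrite (Rabs_minus_sym p1) (Rabs_minus_sym p2) (Rabs_minus_sym p3).
  - move=> [[p1 p2] p3] [[q1 q2] q3] [[r1 r2] r3].
    case: (supd3_ge_coord p1 p2 p3 q1 q2 q3) => pq1 pq2 pq3.
    case: (supd3_ge_coord q1 q2 q3 r1 r2 r3) => qr1 qr2 qr3.
    have := Rdist_tri p1 r1 q1; have := Rdist_tri p2 r2 q2; have := Rdist_tri p3 r3 q3.
    rewrite [supd3 (p1, p2, p3) (r1, r2, r3)]/=.
    rewrite -/(Rdist p1 r1) -/(Rdist p2 r2) -/(Rdist p3 r3) => *.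
    by apply: Rmax_lub; [|apply: Rmax_lub]; lra.
Qed.

(* The Frechet embedding of a triangle xyz with sides a = |xz|, b = |xy|,
   c = |yz|: each vertex goes to the vector of its distances to x, y and z. *)
Lemma supd3_triangle (a b c : R) : triangular a b c ->
  [/\ supd3 (0, b, a) (a, c, 0) = a, supd3 (0, b, a) (b, 0, c) = b &
      supd3 (b, 0, c) (a, c, 0) = c].
Proof.
  move=> [? [? [? [? [? ?]]]]]; rewrite /= /Rmax /Rabs.
  by split; repeat case: Rle_dec; repeat case: Rcase_abs; lra.
Qed.

Lemma supd3_axis (t : R) : 0 <= t -> supd3 (0, 0, 0) (t, 0, 0) = t.
Proof.
  move=> t_ge0; rewrite /= /Rmax /Rabs.
  by repeat case: Rle_dec; repeat case: Rcase_abs; lra.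
Qed.

Section MetricToBMetric.

Variables (n : nat) (F : ('I_n -> R) -> R).
Hypothesis F_MB : P_MB F.

Lemma P_MB_definite : definite F.
Proof.
  move=> v v_ge0; case: F_MB => _ /(_ _ _ (fun=> supd3_metric)) [K [_ [_ [D_eq0 _]]]].
  move: (D_eq0 (fun=> (0, 0, 0)) (fun i => (v i, 0, 0))); rewrite /prodD.
  rewrite (functional_extensionality _ v (fun i => supd3_axis (v_ge0 i))) => ->.
  split=> [v0 i | v0]; first by case: (equal_f v0 i).
  by apply: functional_extensionality => i; rewrite v0.
Qed.

Lemma P_MB_quasi_triangle : exists K, 1 <= K /\ forall a b c : 'I_n -> R,
  (forall i, triangular (a i) (b i) (c i)) -> F a <= K * (F b + F c).
Proof.
  case: F_MB => _ /(_ _ _ (fun=> supd3_metric)) [K [K_ge1 [_ [_ [_ D_tri]]]]].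
  exists K; split=> // a b c abc.
  move: (D_tri (fun i => (0, b i, a i)) (fun i => (b i, 0, c i)) (fun i => (a i, c i, 0))).
  rewrite /prodD; cbv beta.
  have -> : (fun i => supd3 (0, b i, a i) (a i, c i, 0)) = a.
    by apply: functional_extensionality => i; case: (supd3_triangle (abc i)).
  have -> : (fun i => supd3 (0, b i, a i) (b i, 0, c i)) = b.
    by apply: functional_extensionality => i; case: (supd3_triangle (abc i)).
  have -> // : (fun i => supd3 (b i, 0, c i) (a i, c i, 0)) = c.
  by apply: functional_extensionality => i; case: (supd3_triangle (abc i)).
Qed.

End MetricToBMetric.

Section QuasiTriangle.

Variables (n : nat) (F : ('I_n -> R) -> R) (K : R).
Hypothesis F_ge0 : nonneg_fun F.
Hypothesis K_ge1 : 1 <= K.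
Hypothesis F_quasi_triangle : forall a b c : 'I_n -> R,
  (forall i, triangular (a i) (b i) (c i)) -> F a <= K * (F b + F c).

Lemma quasi_monotone_double (x y : 'I_n -> R) :
  (forall i, 0 <= x i <= 2 * y i) -> F x <= 2 * K * F y.
Proof.
  move=> xy; suff : F x <= K * (F y + F y) by lra.
  by apply: F_quasi_triangle => i; have := xy i; rewrite /triangular; lra.
Qed.

Lemma quasi_monotone_pow2 (m : nat) (x y : 'I_n -> R) :
  (forall i, 0 <= x i <= 2 ^ m * y i) -> F x <= (2 * K) ^ m.+1 * F y.
Proof.
  elim: m x y => [|m IH] x y xy.
    by rewrite pow_1; apply: quasi_monotone_double => i; have := xy i; rewrite /=; lra.
  have y_ge0 i : 0 <= y i.
    by have := xy i; have := pow_lt 2 m.+1 ltac:(lra); nra.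
  have Fx : F x <= (2 * K) ^ m.+1 * F (fun i => 2 * y i).
    by apply: IH => i; have := xy i; rewrite /=; lra.
  have F2y : F (fun i => 2 * y i) <= 2 * K * F y.
    by apply: quasi_monotone_double => i; have := y_ge0 i; lra.
  have : 0 <= (2 * K) ^ m.+1 by apply: pow_le; lra.
  change ((2 * K) ^ m.+2) with (2 * K * (2 * K) ^ m.+1); nra.
Qed.

Lemma quasi_triangle_pow2 (m : nat) (a b c : 'I_n -> R) :
  (forall i, 0 <= b i) -> (forall i, 0 <= c i) ->
  (forall i, 0 <= a i <= 2 ^ m * (b i + c i)) ->
  F a <= K * (2 * K) ^ m.+1 * (F b + F c).
Proof.
  move=> b_ge0 c_ge0 abc.
  pose a1 i := Rmin (a i) (2 ^ m * b i); pose a2 i := a i - a1 i.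
  have pow_ge0 : 0 <= 2 ^ m by apply: pow_le; lra.
  have split_a : F a <= K * (F a1 + F a2).
    apply: F_quasi_triangle => i; rewrite /triangular /a2 /a1 /Rmin.
    by have := abc i; have := b_ge0 i; case: Rle_dec; nra.
  have Fa1 : F a1 <= (2 * K) ^ m.+1 * F b.
    apply: quasi_monotone_pow2 => i; rewrite /a1 /Rmin.
    by have := abc i; have := b_ge0 i; case: Rle_dec; nra.
  have Fa2 : F a2 <= (2 * K) ^ m.+1 * F c.
    apply: quasi_monotone_pow2 => i; rewrite /a2 /a1 /Rmin.
    by have := abc i; have := b_ge0 i; have := c_ge0 i; case: Rle_dec; nra.
  have := F_ge0 b_ge0; have := F_ge0 c_ge0; nra.
Qed.

End QuasiTriangle.

Lemma P_MB_P_B (n : nat) (F : ('I_n -> R) -> R) : P_MB F -> P_B F.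
Proof.
  move=> F_MB; have [F_ge0 _] := F_MB.
  have [K [K_ge1 F_quasi_triangle]] := P_MB_quasi_triangle F_MB.
  split=> // X d /bmetric_common_pow2 [m d_pow2].
  have d_semi i := bmetric_K_semimetric (d_pow2 i).
  have d_ge0 i a b : 0 <= d i a b by case: (d_semi i).
  exists (K * (2 * K) ^ m.+1); apply: semimetric_bmetric_K.
  - exact: prodD_semimetric F_ge0 (P_MB_definite F_MB) d_semi.
  - have : 1 <= (2 * K) ^ m.+1 by apply: pow_R1_Rle; lra.
    nra.
  - move=> x y z; apply: (quasi_triangle_pow2 F_ge0 K_ge1 F_quasi_triangle) => i //.
    split=> //; case: (d_pow2 i) => _ [_ [_ [_ d_tri]]]; exact: d_tri.
Qed.

Definition nonzero_ind (n : nat) (v : 'I_n -> R) : R :=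
  if excluded_middle_informative (exists i, v i <> 0) then 1 else 0.

Lemma nonzero_ind_bounds (n : nat) (v : 'I_n -> R) : 0 <= nonzero_ind v <= 1.
Proof. by rewrite /nonzero_ind; case: excluded_middle_informative => _ /=; lra. Qed.

Lemma nonzero_ind_eq0 (n : nat) (v : 'I_n -> R) :
  nonzero_ind v = 0 <-> forall i, v i = 0.
Proof.
  rewrite /nonzero_ind; case: excluded_middle_informative => [[i vi] | v0] /=.
    by split=> [|/(_ i)]; [lra | contradiction].
  split=> // _ i; case: (Req_dec (v i) 0) => // vi.
  by case: v0; exists i.
Qed.

Lemma nonzero_ind_eq1 (n : nat) (v : 'I_n -> R) (i : 'I_n) :
  v i <> 0 -> nonzero_ind v = 1.
Proof.
  move=> vi; rewrite /nonzero_ind; case: excluded_middle_informative => // v0.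
  by case: v0; exists i.
Qed.

Lemma nonzero_ind_triangle (n : nat) (X : 'I_n -> Type)
    (d : forall i, X i -> X i -> R) (x y z : forall i, X i) :
  (forall i, is_semimetric (d i)) ->
  nonzero_ind (fun i => d i (x i) (z i)) <=
  nonzero_ind (fun i => d i (x i) (y i)) + nonzero_ind (fun i => d i (y i) (z i)).
Proof.
  move=> d_semi.
  have := nonzero_ind_bounds (fun i => d i (x i) (y i)).
  have := nonzero_ind_bounds (fun i => d i (y i) (z i)).
  rewrite [nonzero_ind (fun i => d i (x i) (z i))]/nonzero_ind.
  case: excluded_middle_informative => [[i dxz] | _] /=; last lra.
  case: (Req_dec (d i (x i) (y i)) 0) => [/(d_semi i).2.1 xy | dxy].
    have dyz : d i (y i) (z i) <> 0 by rewrite -xy.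
    by rewrite (nonzero_ind_eq1 dyz); lra.
  by rewrite (nonzero_ind_eq1 dxy); lra.
Qed.

Definition coord0_plus_ind (n : nat) (phi : R -> R) (v : 'I_n.+1 -> R) : R :=
  phi (v ord0) + nonzero_ind v.

Section Coord0PlusInd.

Variables (n : nat) (phi : R -> R).
Hypothesis phi0 : phi 0 = 0.
Hypothesis phi_ge0 : forall t, 0 <= t -> 0 <= phi t.

Lemma coord0_plus_ind_not_metric (d : R -> R -> R) :
  (forall x y, phi (d x y) = Rdist x y ^ 2) ->
  ~ is_metric (prodD (X := fun=> R) (fun=> d) (coord0_plus_ind (n := n) phi)).
Proof.
  move=> phi_d [_ [_ [_ [_ D_tri]]]].
  have D_const x y : x <> y ->
      prodD (fun=> d) (coord0_plus_ind phi) (fun=> x) (fun=> y) = (x - y) ^ 2 + 1.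
    move=> xy; have dxy : d x y <> 0.
      move=> dxy0; apply/xy/Rdist_refl; have := phi_d x y; rewrite dxy0 phi0; nra.
    by rewrite /prodD /coord0_plus_ind phi_d (nonzero_ind_eq1 (i := ord0) dxy) /Rdist pow2_abs.
  have := D_tri (fun=> 0) (fun=> 1) (fun=> 2); rewrite !D_const; lra.
Qed.

Lemma coord0_plus_ind_nonneg : nonneg_fun (coord0_plus_ind (n := n) phi).
Proof.
  move=> v v_ge0; have := phi_ge0 (v_ge0 ord0); have := nonzero_ind_bounds v.
  rewrite /coord0_plus_ind; lra.
Qed.

Lemma coord0_plus_ind_definite : definite (coord0_plus_ind (n := n) phi).
Proof.
  move=> v v_ge0; rewrite /coord0_plus_ind -nonzero_ind_eq0; split=> [|v0].
    have := phi_ge0 (v_ge0 ord0); have := nonzero_ind_bounds v; lra.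
  by rewrite v0 (nonzero_ind_eq0 v).1 // phi0 Rplus_0_l.
Qed.

Lemma coord0_plus_ind_bmetric_K (X : 'I_n.+1 -> Type)
    (d : forall i, X i -> X i -> R) (K : R) :
  (forall i, is_semimetric (d i)) -> is_bmetric_K (fun p q => phi (d ord0 p q)) K ->
  is_bmetric_K (prodD d (coord0_plus_ind phi)) K.
Proof.
  move=> d_semi [K_ge1 [_ [_ [_ phi_d_tri]]]].
  apply: semimetric_bmetric_K => // [|x y z].
    exact: prodD_semimetric coord0_plus_ind_nonneg coord0_plus_ind_definite d_semi.
  rewrite /prodD /coord0_plus_ind.
  have := phi_d_tri (x ord0) (y ord0) (z ord0).
  have := nonzero_ind_triangle x y z d_semi.
  have := nonzero_ind_bounds (fun i => d i (x i) (y i)).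
  have := nonzero_ind_bounds (fun i => d i (y i) (z i)).
  nra.
Qed.

End Coord0PlusInd.

Lemma P_M_coord0_plus_ind (n : nat) : P_M (coord0_plus_ind (n := n) id).
Proof.
  split=> [|X d d_metric]; first exact: coord0_plus_ind_nonneg.
  apply: (coord0_plus_ind_bmetric_K (phi := id)) => [//|//|i|]; last exact: d_metric.
  exact: bmetric_K_semimetric (d_metric i).
Qed.

Lemma not_P_BM_coord0_plus_ind (n : nat) : ~ P_BM (coord0_plus_ind (n := n) id).
Proof.
  case=> _ F_BM.
  apply: (coord0_plus_ind_not_metric (phi := id) erefl (d := fun x y => Rdist x y ^ 2)) => //.
  by apply: F_BM => i; exists 2; apply: metric_sq_bmetric Rdist_metric.
Qed.

Lemma P_MB_coord0_sq_plus_ind (n : nat) :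
  P_MB (coord0_plus_ind (n := n) (fun t => t ^ 2)).
Proof.
  have sq0 : 0 ^ 2 = 0 by ring.
  have sq_ge0 t : 0 <= t -> 0 <= t ^ 2 by move=> _; apply: pow2_ge_0.
  split=> [|X d d_metric]; first exact: coord0_plus_ind_nonneg sq_ge0.
  exists 2; apply: (coord0_plus_ind_bmetric_K (phi := fun t => t ^ 2) sq0 sq_ge0).
    by move=> i; apply: bmetric_K_semimetric (d_metric i).
  exact: metric_sq_bmetric (d_metric ord0).
Qed.

Lemma not_P_M_coord0_sq_plus_ind (n : nat) :
  ~ P_M (coord0_plus_ind (n := n) (fun t => t ^ 2)).
Proof.
  have sq0 : 0 ^ 2 = 0 by ring.
  case=> _ F_M.
  apply: (coord0_plus_ind_not_metric (phi := fun t => t ^ 2) sq0 (d := Rdist)) => //.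
  by apply: F_M => i; apply: Rdist_metric.
Qed.

Theorem proposition3p3 (n : nat) (hn : (0 < n)%N) :
  (forall F : ('I_n -> R) -> R, P_BM F -> P_M F) /\
  (exists F : ('I_n -> R) -> R, P_M F /\ ~ P_BM F) /\
  (forall F : ('I_n -> R) -> R, P_M F -> P_MB F) /\
  (exists F : ('I_n -> R) -> R, P_MB F /\ ~ P_M F) /\
  (forall F : ('I_n -> R) -> R, P_MB F <-> P_B F).
Proof.
  case: n hn => [//|n] _.
  split; first exact: P_BM_P_M.
  split.
    exists (coord0_plus_ind id).
    by split; [apply: P_M_coord0_plus_ind | apply: not_P_BM_coord0_plus_ind].
  split; first exact: P_M_P_MB.
  split.
    exists (coord0_plus_ind (fun t => t ^ 2)).
    by split; [apply: P_MB_coord0_sq_plus_ind | apply: not_P_M_coord0_sq_plus_ind].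
  by move=> F; split; [apply: P_MB_P_B | apply: P_B_P_MB].
Qed.
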